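(* Let $Q$ be a fixed positive integer and let $k$ be any positive integer. Then for every integer $i$, \[ \nu_k(\gamma_i)=\left(\frac{2k-1}{2}\right)K_{k-1}\Big(-\nu_2(\gamma_i),\ \nu_2(\gamma_{i+1}),\ \ldots,\ (-1)^{k-1}\nu_2(\gamma_{i+k-2})\Big), \] where the $j$-th argument of $K_{k-1}$ (for $1\le j\le k-1$) is $(-1)^j\nu_2(\gamma_{i+j-1})$ (for $k=1$ the right-hand side is $\left(\frac{1}{2}\right)K_0=1$).
   Context: For $Q\in\mathbb{N}$, the Farey fractions of order $Q$ are $\mathcal{F}_Q=\{a/q\in\mathbb{Q}: 1\le q\le Q,\ 0<a\le q,\ \gcd(a,q)=1\}$. Write $\mathcal{F}_Q=\{\gamma_1,\ldots,\gamma_{N(Q)}\}$ with $1/Q=\gamma_1<\gamma_2<\cdots<\gamma_{N(Q)}=1$, and extend to all $i\in\mathbb{Z}$ by $\gamma_{i+N(Q)}=\gamma_i+1$. For each $i$ write $\gamma_i=p_i/q_i$ in lowest terms with $q_i>0$. For a positive integer $k$, the $k$-index of $\gamma_i$ is $\nu_k(\gamma_i)=p_{i+k-1}q_{i-1}-p_{i-1}q_{i+k-1}$ (this depends on $Q$; note $\nu_1\equiv1$). The convergent polynomials are defined by $K_0=1$, $K_1(x_1)=x_1$, and $K_n(x_1,\ldots,x_n)=x_nK_{n-1}(x_1,\ldots,x_{n-1})+K_{n-2}(x_1,\ldots,x_{n-2})$ for $n\ge2$. The Kronecker symbol $\left(\frac{n}{2}\right)$ is $0$ if $n$ is even, $1$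 if $n\equiv\pm1\pmod 8$, and $-1$ if $n\equiv\pm3\pmod 8$. *)

From mathcomp Require Import all_boot all_order all_algebra.
Set Implicit Arguments. Unset Strict Implicit. Unset Printing Implicit Defensive.
Import Order.TTheory GRing.Theory Num.Theory.
Local Open Scope ring_scope.

(* Farey fractions of order Q, in increasing order:
   gamma_1 < ... < gamma_N, listed here as entries 0 .. N-1. *)
Definition farey_list (Q : nat) : seq rat :=
  sort <=%R (flatten [seq [seq ((a%:R : rat) / (q%:R : rat)) | a <- iota 1 q & coprime a q] | q <- iota 1 Q]).

Definition farey_N (Q : nat) : nat := size (farey_list Q).

(* gamma_i for i : int, with gamma_{i+N} = gamma_i + 1 and gamma_1 = 1/Q. *)
Definition gamma (Q : nat) (i : int) : rat :=
  let n := (farey_N Q)%:Z in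
  nth 0 (farey_list Q) `|modz (i - 1) n|%N + ((divz (i - 1) n)%:~R).

Definition p_ (Q : nat) (i : int) : int := numq (gamma Q i).
Definition q_ (Q : nat) (i : int) : int := denq (gamma Q i).

Definition nu (Q k : nat) (i : int) : int :=
  p_ Q (i + k%:Z - 1) * q_ Q (i - 1) - p_ Q (i - 1) * q_ Q (i + k%:Z - 1).

(* Convergent polynomials K_n(x_1,...,x_n), arguments given as x : nat -> int
   (only x 1, ..., x n are used). *)
Fixpoint K (n : nat) (x : nat -> int) : int :=
  match n with
  | 0 => 1
  | 1 => x 1%N
  | (m.+1 as n1).+1 => x n1.+1 * K n1 x + K m x
  end.

Definition kron2 (n : int) : int :=
  if (2 %| n)%Z then 0
  else if ((modz n 8 == 1) || (modz n 8 == 7)) then 1 else -1.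

From mathcomp Require Import all_boot all_order all_algebra.
From mathcomp Require Import zify ring.
Import Order.TTheory GRing.Theory Num.Theory.
Local Open Scope ring_scope.

(* Consecutive Farey fractions a/q < c/s of order Q satisfy cq - as = 1, and so
   do the last fraction 1 and the first fraction 1/Q + 1 of the next period, as
   this is a translate of the pair 0 < 1/Q.  Writing nu_k(i) as the determinant
   of gamma_{i-1} and gamma_{i+k-1}, the Plücker relation among four fractions
   two of whose consecutive determinants are 1 gives the three-term recurrence
   nu_{k+2}(i) = nu_2(i+k) nu_{k+1}(i) - nu_k(i) with nu_0 = 0 and nu_1 = 1.
   Up to the sign (-1)^C(k,2) = ((2k-1)/2), this is the recurrence of the
   continuants evaluated at the alternating arguments (-1)^j nu_2(i+j-1). *)

Definition qdet (u w : rat) : int := numq w * denq u - numq u * denq w.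

Lemma qdet_plucker (u v w z : rat) :
  qdet u v * qdet w z - qdet u w * qdet v z + qdet u z * qdet v w = 0.
Proof. rewrite /qdet; ring. Qed.

Lemma qdet_three_term (u : rat) {v w z : rat} : qdet v w = 1 -> qdet w z = 1 ->
  qdet u z = qdet v z * qdet u w - qdet u v.
Proof. by move=> vw wz; have := qdet_plucker u v w z; rewrite vw wz; lia. Qed.

Lemma rat_ltE (x y : rat) : (x < y) = (numq x * denq y < numq y * denq x).
Proof. exact: lt_ratE. Qed.

Lemma rat_leE (x y : rat) : (x <= y) = (numq x * denq y <= numq y * denq x).
Proof. exact: le_ratE. Qed.

Lemma coprime_numq_denq (z : rat) : coprimez (numq z) (denq z).
Proof. by rewrite coprimezE coprime_num_den. Qed.

Lemma coprimez_of_det {x y a b : int} : x * a - b * y = 1 -> coprimez x y.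
Proof. by move=> det1; apply/coprimezP; exists (a, - b) => /=; rewrite -det1; ring. Qed.

Lemma numq_denq_fracz (x y : int) : 0 < y -> coprimez x y ->
  numq (x%:~R / y%:~R : rat) = x /\ denq (x%:~R / y%:~R : rat) = y.
Proof.
move=> y_gt0; rewrite coprimezE => cxy.
rewrite coprimeq_num // coprimeq_den // gtr0_sg // mul1r gtr0_norm //.
by rewrite gt_eqF.
Qed.

Lemma numq_denq_fracn {a q : nat} : (0 < q)%N -> coprime a q ->
  numq (a%:R / q%:R : rat) = a%:Z /\ denq (a%:R / q%:R : rat) = q%:Z.
Proof. by move=> q_gt0 cop; apply: (@numq_denq_fracz a q); rewrite ?coprimezE. Qed.

Lemma numq_denq_addz (z : rat) (n : int) :
  numq (z + n%:~R) = numq z + n * denq z /\ denq (z + n%:~R) = denq z.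
Proof.
have -> : z + n%:~R = (numq z + n * denq z)%:~R / (denq z)%:~R.
  rewrite rmorphD rmorphM /= mulrDl -{1}(divq_num_den z); congr (_ + _).
  by rewrite -mulrA divff ?mulr1 // intr_eq0 gt_eqF ?denq_gt0.
apply: numq_denq_fracz; first exact: denq_gt0.
have /coprimezP [[a b] /= bezout] := coprime_numq_denq z.
by apply/coprimezP; exists (a, b - a * n) => /=; rewrite -bezout; ring.
Qed.

Lemma qdet_addz (u w : rat) (n : int) : qdet (u + n%:~R) (w + n%:~R) = qdet u w.
Proof.
rewrite /qdet; have [-> ->] := numq_denq_addz u n; have [-> ->] := numq_denq_addz w n.
ring.
Qed.

Lemma bezout_in_window {a q : int} (m : int) : 0 < q -> coprimez a q ->
  exists x y, x * q - a * y = 1 /\ m - q < y <= m.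
Proof.
move=> q_gt0 /coprimezP [[u v] /= bezout].
have r_ge0 := modz_ge0 (m + u) (lt0r_neq0 q_gt0).
have r_lt := ltz_pmod (m + u) q_gt0.
have m_eq := divz_eq (m + u) q.
exists (v + ((m + u) %/ q)%Z * a), (- u + ((m + u) %/ q)%Z * q); split.
  by rewrite -bezout; ring.
lia.
Qed.

Section FareyList.
Context {Q : nat}.
Local Notation F := (farey_list Q).
Local Notation N := (farey_N Q).
Local Notation nthF := (nth 0 F).

Lemma mem_farey (z : rat) :
  (z \in F) = [&& 0 < numq z, numq z <= denq z & denq z <= Q%:Z].
Proof.
rewrite mem_sort; apply/allpairsPdep/and3P => [[q [a []]]|[num_gt0 num_le den_le]].
  rewrite mem_iota mem_filter mem_iota => /andP[q_gt0 q_le] /and3P[cop a_gt0 a_le] ->.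
  have [-> ->] := numq_denq_fracn q_gt0 cop.
  split; lia.
have den_gt0 := denq_gt0 z.
exists `|denq z|%N, `|numq z|%N; split.
- rewrite mem_iota; lia.
- rewrite mem_filter mem_iota coprime_num_den /=; lia.
- rewrite -{1}(divq_num_den z).
  by rewrite -[numq z]gez0_abs ?ltW // -[denq z]gtz0_abs.
Qed.

Lemma farey_uniq : uniq F.
Proof.
rewrite sort_uniq; apply: allpairs_uniq_dep => [|q _|].
- exact: iota_uniq.
- by rewrite filter_uniq ?iota_uniq.
move=> ? ? /allpairsPdep [q [a [q_mem a_mem ->]]].
move=> /allpairsPdep [r [b [r_mem b_mem ->]]] /= eq_frac.
move: q_mem a_mem r_mem b_mem; rewrite !mem_iota !mem_filter.
move=> /andP[q_gt0 _] /andP[cop_aq _] /andP[r_gt0 _] /andP[cop_br _].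
have [num_a den_q] := numq_denq_fracn q_gt0 cop_aq.
have [num_b den_r] := numq_denq_fracn r_gt0 cop_br.
have [-> ->] : q = r /\ a = b by move: num_a den_q; rewrite eq_frac num_b den_r; lia.
by [].
Qed.

Lemma farey_sorted : sorted <%R F.
Proof. by rewrite lt_sorted_uniq_le farey_uniq sort_sorted //; exact: le_total. Qed.

Lemma nth_farey_ltn : {in gtn N &, {mono nthF : i j / (i < j)%N >-> i < j}}.
Proof. exact: lt_sorted_ltn_nth farey_sorted. Qed.

Lemma nth_farey_leq : {in gtn N &, {mono nthF : i j / (i <= j)%N >-> i <= j}}.
Proof. exact: lt_sorted_leq_nth farey_sorted. Qed.

Lemma farey_nth_index {z : rat} : z \in F -> exists2 k, (k < N)%N & z = nthF k.
Proof. by move=> zF; exists (index z F); rewrite ?index_mem ?nth_index. Qed.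

(* The solution x/y of x q - a y = 1 with Q - q < y <= Q is a Farey fraction
   after u = a/q; if it came after w = c/s, then s = (cq - as) y + (xs - cy) q
   would be at least y + q > Q. *)
Lemma qdet_farey_next (u w : rat) : 0 <= u -> denq u <= Q%:Z ->
  w \in F -> u < w -> (forall z, z \in F -> u < z -> w <= z) -> qdet u w = 1.
Proof.
rewrite -numq_ge0 mem_farey => a_ge0 q_le /and3P[c_gt0 c_le s_le] lt_uw w_min.
have q_gt0 := denq_gt0 u; have s_gt0 := denq_gt0 w.
have [x [y [xy_det /andP[y_gt y_le]]]] :=
  bezout_in_window Q%:Z q_gt0 (coprime_numq_denq u).
have [num_xy den_xy] := @numq_denq_fracz x y ltac:(lia) (coprimez_of_det xy_det).
rewrite rat_ltE in lt_uw.
have cross_id : qdet u w * y + (x * denq w - numq w * y) * denq u = denq w.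
  by rewrite /qdet -[RHS]mul1r -xy_det; ring.
have le_xy_w : x%:~R / y%:~R <= w.
  by rewrite rat_leE num_xy den_xy; rewrite /qdet in cross_id; nia.
have xy_in : x%:~R / y%:~R \in F.
  by rewrite mem_farey num_xy den_xy; rewrite rat_leE num_xy den_xy in le_xy_w; nia.
have lt_u_xy : u < x%:~R / y%:~R by rewrite rat_ltE num_xy den_xy; lia.
have <- : x%:~R / y%:~R = w by apply/eqP; rewrite eq_le le_xy_w w_min.
by rewrite /qdet num_xy den_xy.
Qed.

Lemma qdet_nth_farey_succ (j : nat) : (j.+1 < N)%N -> qdet (nthF j) (nthF j.+1) = 1.
Proof.
move=> jN; have jF : nthF j \in F by rewrite mem_nth // ltnW.
move: (jF); rewrite mem_farey => /and3P[num_gt0 _ den_le].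
apply: qdet_farey_next => //.
- by rewrite -numq_ge0 ltW.
- exact: mem_nth.
- by rewrite nth_farey_ltn ?inE // ltnW.
move=> z /farey_nth_index [k kN ->].
by rewrite nth_farey_ltn ?nth_farey_leq ?inE // ltnW.
Qed.

Hypothesis Q_gt0 : (0 < Q)%N.

Lemma one_in_farey : 1 \in F.
Proof. by rewrite mem_farey /= lez_nat. Qed.

Lemma farey_N_gt0 : (0 < N)%N.
Proof. by rewrite lt0n size_eq0; apply/eqP => F0; move: one_in_farey; rewrite F0. Qed.

Lemma qdet_farey_head : qdet 0 (nthF 0) = 1.
Proof.
have head_in : nthF 0 \in F by rewrite mem_nth // farey_N_gt0.
apply: qdet_farey_next => //.
- by move: head_in; rewrite mem_farey numq_gt0 => /andP[].
- move=> z /farey_nth_index [k kN ->] _.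
  by rewrite nth_farey_leq ?inE ?farey_N_gt0.
Qed.

Lemma nth_farey_last : nthF N.-1 = 1.
Proof.
have NF := farey_N_gt0; have lastN : (N.-1 < N)%N by rewrite prednK.
have [k kN one_k] := farey_nth_index one_in_farey.
apply/eqP; rewrite eq_le {2}one_k nth_farey_leq ?inE // -ltnS prednK // kN andbT.
have := mem_nth 0 lastN; rewrite mem_farey => /and3P[_ num_le _].
by rewrite rat_leE /= mulr1 mul1r.
Qed.

Lemma gamma_nth (n : int) (j : nat) : (j < N)%N ->
  gamma Q (n * N%:Z + j%:Z + 1) = nthF j + n%:~R.
Proof.
move=> jN; have N_neq0 : N%:Z != 0 by have := farey_N_gt0; lia.
rewrite /gamma addrK divzMDl // modzMDl divz_small ?modz_small ?addr0 //; lia.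
Qed.

Lemma gamma_index (m : int) : exists n j, (j < N)%N /\ m = n * N%:Z + j%:Z + 1.
Proof.
have N_neq0 : N%:Z != 0 by have := farey_N_gt0; lia.
have r_ge0 := modz_ge0 (m - 1) N_neq0; have r_lt := ltz_mod (m - 1) N_neq0.
exists ((m - 1) %/ N%:Z)%Z, `|((m - 1) %% N%:Z)%Z|%N.
have := divz_eq (m - 1) N%:Z; split; lia.
Qed.

Lemma qdet_gamma_succ (m : int) : qdet (gamma Q m) (gamma Q (m + 1)) = 1.
Proof.
have [n [j [jN ->]]] := gamma_index m; rewrite gamma_nth //.
have [jN1 | j_last] := ltnP j.+1 N.
  have -> : n * N%:Z + j%:Z + 1 + 1 = n * N%:Z + j.+1%:Z + 1 by lia.
  by rewrite gamma_nth // qdet_addz qdet_nth_farey_succ.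
have -> : n * N%:Z + j%:Z + 1 + 1 = (n + 1) * N%:Z + 0%N%:Z + 1 by lia.
have -> : j = N.-1 by lia.
rewrite gamma_nth ?farey_N_gt0 // nth_farey_last.
have -> : 1 + n%:~R = 0 + (n + 1)%:~R :> rat by rewrite rmorphD /= addrC add0r.
by rewrite qdet_addz qdet_farey_head.
Qed.

End FareyList.

Lemma nu0 (Q : nat) (i : int) : nu Q 0 i = 0.
Proof. by rewrite /nu addr0 subrr. Qed.

Lemma nu1 (Q : nat) (i : int) : (0 < Q)%N -> nu Q 1 i = 1.
Proof.
move=> Q_gt0; have := qdet_gamma_succ Q_gt0 (i - 1).
by rewrite /nu /qdet subrK addrK.
Qed.

Lemma nu_recurrence (Q : nat) (i : int) (k : nat) : (0 < Q)%N ->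
  nu Q k.+2 i = nu Q 2 (i + k%:Z) * nu Q k.+1 i - nu Q k i.
Proof.
move=> Q_gt0.
have succ1 := qdet_gamma_succ Q_gt0 (i + k%:Z - 1); rewrite subrK in succ1.
have succ2 := qdet_gamma_succ Q_gt0 (i + k%:Z).
have := qdet_three_term (gamma Q (i - 1)) succ1 succ2.
rewrite /nu /qdet.
have -> : i + k.+2%:Z - 1 = i + k%:Z + 1 by lia.
have -> : i + k%:Z + 2%:Z - 1 = i + k%:Z + 1 by lia.
by have -> : i + k.+1%:Z - 1 = i + k%:Z by lia.
Qed.

Lemma signr_bin2S (n : nat) :
  (-1) ^+ 'C(n.+2, 2) = (-1) ^+ n.+1 * (-1) ^+ 'C(n.+1, 2) :> int.
Proof. by rewrite binS bin1 exprD mulrC. Qed.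

Lemma kron2_add4 (m : int) : ~~ (2 %| m)%Z -> kron2 (m + 4) = - kron2 m.
Proof. rewrite /kron2; do !case: ifP; lia. Qed.

(* ((2n+1)/2) = (-1)^((4n^2+4n)/8) = (-1)^C(n+1,2). *)
Lemma kron2_odd (n : nat) : kron2 (2 * n.+1%:Z - 1) = (-1) ^+ 'C(n.+1, 2).
Proof.
elim/ltn_ind: n => -[|[|n]] IH //.
have -> : 2 * n.+3%:Z - 1 = 2 * n.+1%:Z - 1 + 4 by lia.
rewrite kron2_add4; last by lia.
rewrite IH // !signr_bin2S mulrA -exprD -[(-1) ^+ (_ + _)]signr_odd oddD /=.
by rewrite negbK addbN addbb mulN1r.
Qed.

Lemma K_SS (n : nat) (x : nat -> int) : K n.+2 x = x n.+2 * K n.+1 x + K n x.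
Proof. by []. Qed.

Lemma continuant_signed_recurrence (v y : nat -> int) :
  v 0%N = 0 -> v 1%N = 1 -> (forall n, v n.+2 = y n.+1 * v n.+1 - v n) ->
  forall n, v n.+1 = (-1) ^+ 'C(n.+1, 2) * K n (fun j => (-1) ^+ j * y j).
Proof.
move=> v0 v1 v_rec n; set x := fun j => _.
suff : v n.+1 = (-1) ^+ 'C(n.+1, 2) * K n x /\
       v n.+2 = (-1) ^+ 'C(n.+2, 2) * K n.+1 x by case.
elim: n => [|n [IH1 IH2]].
  by rewrite v_rec v1 v0 bin_small // binn mulr1 subr0 /= /x expr1 !mulN1r opprK.
split; first exact: IH2.
rewrite v_rec IH1 IH2 K_SS /x !signr_bin2S !exprS -[(-1) ^+ n]signr_odd.
by case: (odd n); ring.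
Qed.

Theorem theorem1 (Q : nat) (hQ : (0 < Q)%N) (k : nat) (hk : (0 < k)%N) (i : int) :
  nu Q k i =
  kron2 (2 * k%:Z - 1) *
  K k.-1 (fun j : nat => (-1) ^+ j * nu Q 2 (i + j%:Z - 1)).
Proof.
case: k hk => // n _ /=; rewrite kron2_odd.
apply: (continuant_signed_recurrence (nu Q ^~ i)) => [|/=|m].
- exact: nu0.
- exact: nu1.
- have -> : i + m.+1%:Z - 1 = i + m%:Z by lia.
  exact: nu_recurrence.
Qed.
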